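(* Let $k$ be a positive integer. Let $I_1,\dots,I_n\subset\mathbb{R}$ be segments of lengths $\ell_1,\dots,\ell_n>0$ with midpoints $c_1,\dots,c_n$. Assume that every point of $\mathbb{R}$ belongs to at most $k$ of the interiors of $I_1,\dots,I_n$. Let $c=\frac{\sum_i\ell_ic_i}{\sum_i\ell_i}$, and let $I$ be the segment of length $\frac1k\sum_i\ell_i$ with midpoint $c$. Then $I\subset\operatorname{conv}\bigcup_i I_i$. *)

From HB Require Import structures.
From mathcomp Require Import all_boot all_order all_algebra.
Set Implicit Arguments. Unset Strict Implicit. Unset Printing Implicit Defensive.
Import Order.TTheory GRing.Theory Num.Theory.
Local Open Scope ring_scope.

Definition seg (R : realFieldType) (m len : R) (x : R) : bool :=
  (m - len / 2 <= x) && (x <= m + len / 2).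

Definition seg_int (R : realFieldType) (m len : R) (x : R) : bool :=
  (m - len / 2 < x) && (x < m + len / 2).

Definition convex_set (R : realFieldType) (C : R -> Prop) : Prop :=
  forall x y t : R, C x -> C y -> 0 <= t -> t <= 1 -> C (t * x + (1 - t) * y).

Definition conv (R : realFieldType) (S : R -> Prop) (x : R) : Prop :=
  forall C : R -> Prop, convex_set C -> (forall y, S y -> C y) -> C x.

(* Write the segments as [a_i, r_i] and let b = max r_i.  Since
   sum_i l_i (b - c_i) = 1/2 sum_i ((b - a_i)^2 - (b - r_i)^2), the right half of
   the inclusion, c + L/(2k) <= b, is the bathtub inequality
   L^2 <= k sum_i ((b - a_i)^2 - (b - r_i)^2): a mass of total length L and density
   at most k has least first moment about b when packed into [b - L/k, b].  It is
   proved by induction on the number of nondegenerate intervals, cutting them all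
   at the leftmost right end p.  The parts below p lie in at most k intervals with
   a common point, and by Cauchy-Schwarz their total length D satisfies
   D^2 <= k sum d_i^2; the parts above p have total length at most k (b - p).
   The left half follows by reflection. *)

From HB Require Import structures.
From mathcomp Require Import all_boot all_order all_algebra.
From mathcomp Require Import ring lra.
Set Implicit Arguments. Unset Strict Implicit. Unset Printing Implicit Defensive.
Import Order.TTheory GRing.Theory Num.Theory.
Local Open Scope ring_scope.

Section PlyBoundedIntervals.

Variables (R : realFieldType) (I : finType).
Implicit Types (a r : I -> R) (p b s : R).

Definition ply_le (k : nat) a r :=
  forall x : R, (#|[set i | ((a i < x) && (x < r i))%R]| <= k)%N.

Definition nondeg a r := [set i | a i < r i].

Definition clip p (f : I -> R) i := Num.max (f i) p.

Definition len_below p a r i := Num.min (r i) p - Num.min (a i) p.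

(* [(b - a)^2 - (b - r)^2 = 2 (r - a) (b - (a + r) / 2)]: twice the first moment
   about [b] of the interval [a, r] with length measure. *)
Definition moment b a r := \sum_i ((b - a i) ^+ 2 - (b - r i) ^+ 2).

Lemma nondeg_eq0 a r : (forall i, a i <= r i) -> nondeg a r = set0 ->
  forall i, a i = r i.
Proof.
move=> har h i; apply/eqP; rewrite eq_le har leNgt; apply/negP => lt_ar.
have : i \in nondeg a r by rewrite inE.
by rewrite h inE.
Qed.

Lemma clip_le a r p : (forall i, a i <= r i) -> forall i, clip p a i <= clip p r i.
Proof.
move=> har i; rewrite /clip.
by case: (lerP (a i) p); case: (lerP (r i) p); have := har i; lra.
Qed.

Lemma ply_le_clip k a r p : ply_le k a r -> ply_le k (clip p a) (clip p r).
Proof.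
move=> hply x; apply: leq_trans (hply x); apply: subset_leq_card.
apply/subsetP => i; rewrite !inE /clip.
by case: (lerP (a i) p); case: (lerP (r i) p); lra.
Qed.

Lemma nondeg_clip a r p : nondeg (clip p a) (clip p r) \subset nondeg a r.
Proof.
apply/subsetP => i; rewrite !inE /clip.
by case: (lerP (a i) p); case: (lerP (r i) p); lra.
Qed.

Lemma clip_at_right_end a r j : a j <= r j -> j \notin nondeg (clip (r j) a) (clip (r j) r).
Proof. by move=> har; rewrite inE /clip maxxx (max_idPr har) ltxx. Qed.

(* Clipping at [r j] makes interval [j] degenerate and creates no new
   nondegenerate interval, so this is an induction on [#|nondeg a r|]. *)
Lemma clip_induction (P : (I -> R) -> (I -> R) -> Prop) :
  (forall a r, (forall i, a i = r i) -> P a r) ->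
  (forall a r j, (forall i, a i <= r i) -> j \in nondeg a r ->
     (forall i, i \in nondeg a r -> r j <= r i) ->
     P (clip (r j) a) (clip (r j) r) -> P a r) ->
  forall a r, (forall i, a i <= r i) -> P a r.
Proof.
move=> base step a r; move: {2}#|nondeg a r| (leqnn #|nondeg a r|) => m.
elim: m a r => [|m IH] a r.
  by rewrite leqn0 cards_eq0 => /eqP h har; apply/base/nondeg_eq0.
move=> hm har; have [/eqP h|/set0Pn[j0 hj0]] := boolP (nondeg a r == set0).
  exact/base/nondeg_eq0.
have [j hj jmin] := arg_minP r hj0.
apply: (step _ _ j) => //; apply: IH; last exact: clip_le.
have sub : nondeg (clip (r j) a) (clip (r j) r) \subset nondeg a r :\ j.
  apply/subsetP => i hi; rewrite in_setD1 (subsetP (nondeg_clip a r (r j)) i hi) andbT.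
  by apply: contraTneq hi => ->; apply: clip_at_right_end.
by apply: leq_trans (subset_leq_card sub) _; move: hm; rewrite (cardsD1 j) [j \in _]hj.
Qed.

Definition starts_below p a r := [set i | (a i < r i) && (a i < p)].

Lemma len_split a r p i : r i - a i = (clip p r i - clip p a i) + len_below p a r i.
Proof. by rewrite /clip /len_below; case: (lerP (a i) p); case: (lerP (r i) p); lra. Qed.

Lemma sum_len_split a r p :
  \sum_i (r i - a i) = \sum_i (clip p r i - clip p a i) + \sum_i len_below p a r i.
Proof. by rewrite -big_split; apply: eq_bigr => i _; apply: len_split. Qed.

Lemma len_below_eq0 a r p i :
  a i <= r i -> i \notin starts_below p a r -> len_below p a r i = 0.
Proof.
rewrite inE negb_and -!leNgt /len_below => har.
by case: (lerP (a i) p); case: (lerP (r i) p); lra.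
Qed.

Lemma len_below_E a r p i : a i < p -> p <= r i -> len_below p a r i = p - a i.
Proof. by rewrite /len_below; case: (lerP (a i) p); case: (lerP (r i) p); lra. Qed.

(* Clipping at [p] moves the part of [a i, r i] below [p] to the point [p]. *)
Lemma moment_term_split a r p b i : a i <= r i -> (a i < r i -> p <= r i) ->
  (b - a i) ^+ 2 - (b - r i) ^+ 2 =
  ((b - clip p a i) ^+ 2 - (b - clip p r i) ^+ 2)
  + 2 * len_below p a r i * (b - p) + len_below p a r i ^+ 2.
Proof.
rewrite /clip /len_below => har hpr.
case: (lerP (a i) p) => hap; case: (lerP (r i) p) => hrp; try lra; try ring.
have [->|->] : r i = a i \/ r i = p.
  by case: (ltrP (a i) (r i)) => h; [right; have := hpr h | left]; lra.
all: ring.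
Qed.

Lemma card_common_point k a r (A : {set I}) x :
  ply_le k a r -> (forall i, i \in A -> a i < x < r i) -> (#|A| <= k)%N.
Proof.
move=> hply hA; apply: leq_trans (hply x); apply: subset_leq_card.
by apply/subsetP => i /hA; rewrite inE.
Qed.

Lemma sqr_sum_le_card (A : {set I}) (d : I -> R) :
  (\sum_(i in A) d i) ^+ 2 <= #|A|%:R * \sum_(i in A) d i ^+ 2.
Proof.
have [->|/set0Pn[i0 hi0]] := eqVneq A set0.
  by rewrite !big_set0 cards0 mul0r expr0n.
set D := \sum_(i in A) d i; set Q := \sum_(i in A) d i ^+ 2.
set m : R := #|A|%:R.
have m_gt0 : 0 < m by rewrite ltr0n (cardD1 i0) hi0.
have : 0 <= \sum_(i in A) (m * d i - D) ^+ 2 by apply: sumr_ge0 => i _; apply: sqr_ge0.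
have -> : \sum_(i in A) (m * d i - D) ^+ 2 = m * (m * Q - D ^+ 2).
  rewrite (eq_bigr (fun i => m ^+ 2 * d i ^+ 2 - 2 * m * D * d i + D ^+ 2));
    last by move=> i _; ring.
  rewrite !big_split /= sumrN -!mulr_sumr -/D -/Q sumr_const -mulr_natr -/m; ring.
by rewrite (pmulr_rge0 _ m_gt0) subr_ge0.
Qed.

Section ClipAtLeftmostRightEnd.

Variables (a r : I -> R) (j : I).
Hypotheses (har : forall i, a i <= r i) (jmin : forall i, i \in nondeg a r -> r j <= r i).

Let p := r j.

Lemma le_right_end i : a i < r i -> p <= r i.
Proof. by move=> nd; apply: jmin; rewrite inE. Qed.

(* Every nondegenerate interval reaches [p], so those starting below [p] all
   contain the midpoint of [p] and the largest of their left ends. *)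
Lemma card_starts_below_le k : ply_le k a r -> (#|starts_below p a r| <= k)%N.
Proof.
move=> hply; set A := starts_below p a r.
have [/eqP->|/set0Pn[i0 hi0]] := boolP (A == set0); first by rewrite cards0.
have [i1 hi1 i1max] := arg_maxP a hi0.
have /andP[_ ap1] : (a i1 < r i1) && (a i1 < p) by have : i1 \in A := hi1; rewrite inE.
apply: (card_common_point (x := (a i1 + p) / 2) hply) => i hi.
have ai : a i <= a i1 := i1max i hi.
move: hi; rewrite inE => /andP[/le_right_end pr ap_i].
by apply/andP; split; lra.
Qed.

Lemma sum_len_below (F : R -> R) : F 0 = 0 ->
  \sum_i F (len_below p a r i) = \sum_(i in starts_below p a r) F (p - a i).
Proof.
move=> F0; rewrite [RHS]big_mkcond; apply: eq_bigr => i _.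
case: ifP => [|/negbT /(len_below_eq0 (har i)) ->] //.
by rewrite inE => /andP[/le_right_end pr ap]; rewrite len_below_E.
Qed.

Lemma moment_clip_split b : moment b a r =
  moment b (clip p a) (clip p r)
  + 2 * (\sum_i len_below p a r i) * (b - p) + \sum_i len_below p a r i ^+ 2.
Proof.
rewrite /moment mulr_sumr mulr_suml -!big_split /=.
by apply: eq_bigr => i _; apply: moment_term_split => //; apply: le_right_end.
Qed.

Lemma clip_nondeg_in b : (forall i, a i < r i -> r i <= b) ->
  forall i, clip p a i < clip p r i -> p <= clip p a i /\ clip p r i <= b.
Proof.
move=> hrb i hi; have nd : a i < r i.
  by have := subsetP (nondeg_clip a r p) i; rewrite !inE; apply.
have pr := le_right_end nd.
by rewrite /clip le_max lexx orbT (max_idPl pr); split => //; apply: hrb.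
Qed.

End ClipAtLeftmostRightEnd.

Lemma ply_len_le k a r s b : (forall i, a i <= r i) -> ply_le k a r -> s <= b ->
  (forall i, a i < r i -> s <= a i /\ r i <= b) ->
  \sum_i (r i - a i) <= k%:R * (b - s).
Proof.
move=> har; move: a r har s b.
apply: clip_induction => [a r deg|a r j har hj jmin IH] s b.
  by move=> _ sb _; rewrite big1 ?mulr_ge0 ?subr_ge0 // => i _; rewrite deg subrr.
move=> hply sb hin; set p := r j; set A := starts_below p a r.
have nd_j : a j < r j by rewrite inE in hj.
have [sa pb] := hin j nd_j.
have below : \sum_i len_below p a r i <= k%:R * (p - s).
  rewrite (sum_len_below har jmin (F := id)) //.
  apply: (@le_trans _ _ (#|A|%:R * (p - s))).
    rewrite mulrC mulr_natr -sumr_const; apply: ler_sum => i; rewrite inE => /andP[nd _].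
    by have [] := hin i nd; rewrite /p; lra.
  apply: ler_wpM2r; first by rewrite subr_ge0 /p; lra.
  by rewrite ler_nat; apply: card_starts_below_le.
have above : \sum_i (clip p r i - clip p a i) <= k%:R * (b - p).
  apply: IH => //; first exact: ply_le_clip.
  by apply: clip_nondeg_in => // i /hin[].
by rewrite (sum_len_split a r p); lra.
Qed.

Lemma ply_moment_ge k a r b : (forall i, a i <= r i) -> ply_le k a r ->
  (forall i, a i < r i -> r i <= b) ->
  (\sum_i (r i - a i)) ^+ 2 <= k%:R * moment b a r.
Proof.
move: a r; apply: clip_induction => [a r deg|a r j har hj jmin IH] hply hrb.
  rewrite big1 ?expr0n ?mulr_ge0 ?ler0n //; last by move=> i _; rewrite deg subrr.
  by rewrite /moment big1 // => i _; rewrite deg subrr.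
set p := r j.
set L' := \sum_i (clip p r i - clip p a i).
set D := \sum_i len_below p a r i.
set Q := \sum_i len_below p a r i ^+ 2.
have D_ge0 : 0 <= D.
  rewrite /D (sum_len_below har jmin (F := id)) //.
  by apply: sumr_ge0 => i; rewrite inE => /andP[_]; lra.
have DQ : D ^+ 2 <= k%:R * Q.
  rewrite /D /Q (sum_len_below har jmin (F := id)) //.
  rewrite (sum_len_below har jmin (F := fun x => x ^+ 2)) ?expr0n //.
  apply: le_trans (sqr_sum_le_card _ _) _.
  apply: ler_wpM2r; first by apply: sumr_ge0 => i _; apply: sqr_ge0.
  by rewrite ler_nat; apply: card_starts_below_le.
have pb : p <= b by apply: hrb; rewrite inE in hj.
have hin := clip_nondeg_in jmin hrb.
have L'_le : L' <= k%:R * (b - p).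
  by apply: ply_len_le; [exact: clip_le | exact: ply_le_clip | exact: pb | exact: hin].
have IH' : L' ^+ 2 <= k%:R * moment b (clip p a) (clip p r).
  by apply: IH; [exact: ply_le_clip | by move=> i /hin[]].
rewrite (moment_clip_split har jmin b) (sum_len_split a r p) -/p -/L' -/D -/Q.
have cross : D * L' <= D * (k%:R * (b - p)) by apply: ler_wpM2l.
lra.
Qed.

End PlyBoundedIntervals.

Lemma conv_between (R : realFieldType) (S : R -> Prop) (u v x : R) :
  S u -> S v -> u <= x <= v -> conv S x.
Proof.
move=> Su Sv /andP[ux xv] C hC hS.
have [vu|uv] := lerP v u.
  suff -> : x = u by exact: hS.
  lra.
pose t := (v - x) / (v - u).
have -> : x = t * u + (1 - t) * v by rewrite /t; field; rewrite subr_eq0 gt_eqF.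
apply: hC; [exact: hS | exact: hS | |].
- by apply: divr_ge0; lra.
- by rewrite ler_pdivrMr ?subr_gt0 // mul1r; lra.
Qed.

Section WeightedCenter.

Variables (R : realFieldType) (I : finType) (k : nat) (l c : I -> R) (i0 : I).
Hypotheses (k_gt0 : (0 < k)%N) (l_gt0 : forall i, 0 < l i).
Hypothesis ply_seg : forall x : R, (#|[set i | seg_int (c i) (l i) x]| <= k)%N.

Let L := \sum_i l i.

Definition wmean (w f : I -> R) := (\sum_i w i * f i) / \sum_i w i.

Lemma total_len_gt0 : 0 < L.
Proof.
rewrite /L (bigD1 i0) //=; apply: ltr_wpDr; last exact: l_gt0.
by apply: sumr_ge0 => i _; apply: ltW.
Qed.

Lemma wmean_add_half_le b : (forall i, c i + l i / 2 <= b) ->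
  wmean l c + L / k%:R / 2 <= b.
Proof.
move=> hb; set a := fun i => c i - l i / 2; set r := fun i => c i + l i / 2.
have har i : a i <= r i by rewrite /a /r; have := l_gt0 i; lra.
have := ply_moment_ge har ply_seg (fun i _ => hb i : r i <= b).
have -> : \sum_i (r i - a i) = L by apply: eq_bigr => i _; rewrite /r /a; field.
have -> : moment b a r = 2 * (b * L - \sum_i l i * c i).
  rewrite /moment /L mulr_sumr -sumrB mulr_sumr; apply: eq_bigr => i _.
  by rewrite /a /r; field.
rewrite /wmean -/L; have L_gt0 := total_len_gt0; have k_gt0R : 0 < k%:R :> R by rewrite ltr0n.
set S := \sum_i l i * c i => h.
have -> : S / L + L / k%:R / 2 = (2 * k%:R * S + L ^+ 2) / (2 * k%:R * L).
  by field; rewrite !lt0r_neq0.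
by rewrite ler_pdivrMr ?mulr_gt0 //; lra.
Qed.

End WeightedCenter.

Lemma seg_int_opp (R : realFieldType) (m len x : R) :
  seg_int (- m) len x = seg_int m len (- x).
Proof. by rewrite /seg_int; apply/idP/idP => /andP[? ?]; apply/andP; split; lra. Qed.

Lemma wmean_opp (R : realFieldType) (I : finType) (w f : I -> R) :
  wmean w (fun i => - f i) = - wmean w f.
Proof. by rewrite /wmean -mulNr -sumrN; congr (_ / _); apply: eq_bigr => i _; rewrite mulrN. Qed.

Lemma wmean_sub_half_ge (R : realFieldType) (I : finType) (k : nat) (l c : I -> R) (i0 : I) a :
  (0 < k)%N -> (forall i, 0 < l i) ->
  (forall x : R, #|[set i | seg_int (c i) (l i) x]| <= k)%N ->
  (forall i, a <= c i - l i / 2) ->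
  a <= wmean l c - (\sum_i l i) / k%:R / 2.
Proof.
move=> k_gt0 l_gt0 ply_seg ha.
have ply_opp x : (#|[set i | seg_int (- c i) (l i) x]| <= k)%N.
  by under eq_finset => i do rewrite seg_int_opp; apply: ply_seg.
have hb i : - c i + l i / 2 <= - a by have := ha i; lra.
by have := wmean_add_half_le i0 k_gt0 l_gt0 ply_opp hb; rewrite wmean_opp; lra.
Qed.

Lemma seg_left_end (R : realFieldType) (m len : R) : 0 <= len -> seg m len (m - len / 2).
Proof. by move=> len_ge0; rewrite /seg lexx /=; lra. Qed.

Lemma seg_right_end (R : realFieldType) (m len : R) : 0 <= len -> seg m len (m + len / 2).
Proof. by move=> len_ge0; rewrite /seg lexx andbT; lra. Qed.

Theorem lemma8 (R : realFieldType) (k n : nat) (l c : 'I_n -> R) :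
  (0 < k)%N -> (0 < n)%N ->
  (forall i, 0 < l i) ->
  (forall x : R, #|[set i : 'I_n | seg_int (c i) (l i) x]| <= k)%N ->
  let L := \sum_(i < n) l i in
  let cc := (\sum_(i < n) l i * c i) / L in
  forall x : R, seg cc (L / k%:R) x ->
    conv (fun y : R => exists i : 'I_n, seg (c i) (l i) y) x.
Proof.
move=> k_gt0 n_gt0 l_gt0 ply_seg L cc x hx.
pose i0 := Ordinal n_gt0.
have [jl _ jl_min] := arg_minP (fun i => c i - l i / 2) (isT : predT i0).
have [jr _ jr_max] := arg_maxP (fun i => c i + l i / 2) (isT : predT i0).
have left_le := wmean_sub_half_ge i0 k_gt0 l_gt0 ply_seg (fun i => jl_min i isT).
have right_ge := wmean_add_half_le i0 k_gt0 l_gt0 ply_seg (fun i => jr_max i isT).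
apply: (conv_between (u := c jl - l jl / 2) (v := c jr + l jr / 2)).
- by exists jl; apply/seg_left_end/ltW.
- by exists jr; apply/seg_right_end/ltW.
- by move: hx left_le right_ge; rewrite /seg /wmean -/L -/cc => /andP[? ?] ? ?; apply/andP; split; lra.
Qed.
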